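(* Let $X$ and $Y$ be complete orthomodular lattices. Then (i) the set $\mathrm{Lin}(X,Y)$ of all linear maps $X\to Y$, ordered pointwise, is a complete lattice; and (ii) $\mathrm{Lin}(X)=\mathrm{Lin}(X,X)$, with composition as multiplication, the identity map as unit, pointwise joins, and involution $f\mapsto f^\star$, is a unital involutive quantale.
   Context: An ortholattice is a bounded lattice with an involutive order-reversing map $x\mapsto x^\perp$ satisfying $x\wedge x^\perp=0$; it is orthomodular if $x\le y$ implies $y=x\vee(x^\perp\wedge y)$. Write $x\perp y$ iff $x\le y^\perp$. A map $f\colon X\to Y$ between complete orthomodular lattices is linear if there is $h\colon Y\to X$ with $f(x)\perp y \iff x\perp h(y)$ for all $x,y$; such $h$ is unique, denoted $f^\star$. A quantale is a complete lattice $Q$ with an associative multiplication distributing over arbitrary joins on both sides; it is unital if it has $e$ with $e\cdot a=a=a\cdot e$ for all $a$; it is involutive if equipped with a semigroup involution $*$ (i.e. $a^{**}=a$, $(ab)^*=b^*a^*$) preserving arbitrary joins. *)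

Definition is_lub {T : Type} (le : T -> T -> Prop) (S : T -> Prop) (s : T) : Prop :=
  (forall x, S x -> le x s) /\ (forall z, (forall x, S x -> le x z) -> le s z).

Definition is_partial_order {T : Type} (le : T -> T -> Prop) : Prop :=
  (forall x, le x x) /\
  (forall x y z, le x y -> le y z -> le x z) /\
  (forall x y, le x y -> le y x -> x = y).

Definition is_complete_lattice {T : Type} (le : T -> T -> Prop) : Prop :=
  is_partial_order le /\ forall S : T -> Prop, exists s, is_lub le S s.

Record COLat := {
  car :> Type;
  le : car -> car -> Prop;
  sup : (car -> Prop) -> car;
  oc : car -> car
}.

Section Derived.
Variable L : COLat.
Definition bot : car L := sup L (fun _ => False).
Definition top : car L := sup L (fun _ => True).
Definition join2 (x y : car L) : car L := sup L (fun z => z = x \/ z = y).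
Definition inf (S : car L -> Prop) : car L :=
  sup L (fun z => forall x, S x -> le L z x).
Definition meet2 (x y : car L) : car L := inf (fun z => z = x \/ z = y).
Definition perp (x y : car L) : Prop := le L x (oc L y).
End Derived.

Definition is_COML (L : COLat) : Prop :=
  is_partial_order (le L) /\
  (forall S, is_lub (le L) S (sup L S)) /\
  (forall x, oc L (oc L x) = x) /\
  (forall x y, le L x y -> le L (oc L y) (oc L x)) /\
  (forall x, meet2 L x (oc L x) = bot L) /\
  (forall x y, le L x y -> y = join2 L x (meet2 L (oc L x) y)).

Definition linear (X Y : COLat) (f : car X -> car Y) : Prop :=
  exists h : car Y -> car X, forall x y, perp Y (f x) y <-> perp X x (h y).

Definition Lin (X Y : COLat) : Type := { f : car X -> car Y | linear X Y f }.

Definition lin_le (X Y : COLat) (f g : Lin X Y) : Prop :=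
  forall x, le Y (proj1_sig f x) (proj1_sig g x).

Definition is_quantale {Q : Type} (le : Q -> Q -> Prop) (mul : Q -> Q -> Q) : Prop :=
  is_complete_lattice le /\
  (forall a b c, mul a (mul b c) = mul (mul a b) c) /\
  (forall a S s, is_lub le S s ->
     is_lub le (fun t => exists u, S u /\ t = mul a u) (mul a s) /\
     is_lub le (fun t => exists u, S u /\ t = mul u a) (mul s a)).

Definition is_unital_quantale {Q : Type} (le : Q -> Q -> Prop) (mul : Q -> Q -> Q)
  (e : Q) : Prop :=
  is_quantale le mul /\ (forall a, mul e a = a /\ mul a e = a).

Definition is_unital_involutive_quantale {Q : Type} (le : Q -> Q -> Prop)
  (mul : Q -> Q -> Q) (e : Q) (star : Q -> Q) : Prop :=
  is_unital_quantale le mul e /\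
  (forall a, star (star a) = a) /\
  (forall a b, star (mul a b) = mul (star b) (star a)) /\
  (forall S s, is_lub le S s -> is_lub le (fun t => exists u, S u /\ t = star u) (star s)).

(* Only the involution x |-> x^⊥ and completeness are used: orthogonality
   x ⊥ y determines both sides (y = z iff they have the same orthogonal
   elements), so linear maps are exactly the maps with an adjoint, and they
   preserve arbitrary joins.  Pointwise joins of linear maps are linear with
   the join of the adjoints as adjoint, composition of linear maps is linear
   with the composed adjoints, and the adjoint of a linear map is linear; the
   quantale laws then reduce to pointwise computations. *)

From Stdlib Require Import FunctionalExtensionality PropExtensionality ProofIrrelevance.

Set Implicit Arguments.

Definition is_complete_involution_lattice (L : COLat) : Prop :=
  is_partial_order (le L) /\
  (forall S, is_lub (le L) S (sup L S)) /\
  (forall x, oc L (oc L x) = x) /\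
  (forall x y, le L x y -> le L (oc L y) (oc L x)).

Lemma is_COML_involution (L : COLat) :
  is_COML L -> is_complete_involution_lattice L.
Proof.
  intros (Hpo & Hsup & Hocc & Hanti & _).
  exact (conj Hpo (conj Hsup (conj Hocc Hanti))).
Qed.

Lemma sup_ext (L : COLat) (A B : car L -> Prop) :
  (forall z, A z <-> B z) -> sup L A = sup L B.
Proof.
  intro hAB; f_equal; apply functional_extensionality; intro z.
  apply propositional_extensionality, hAB.
Qed.

Section InvolutionLattice.

Variable L : COLat.
Hypothesis HL : is_complete_involution_lattice L.

Lemma ord_refl x : le L x x.
Proof. apply HL. Qed.

Lemma ord_trans x y z : le L x y -> le L y z -> le L x z.
Proof. apply HL. Qed.

Lemma ord_antisym x y : le L x y -> le L y x -> x = y.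
Proof. apply HL. Qed.

Lemma le_sup (S : car L -> Prop) x : S x -> le L x (sup L S).
Proof. apply (proj1 (proj2 HL) S). Qed.

Lemma sup_le (S : car L -> Prop) z : (forall x, S x -> le L x z) -> le L (sup L S) z.
Proof. apply (proj1 (proj2 HL) S). Qed.

Lemma ocK x : oc L (oc L x) = x.
Proof. apply HL. Qed.

Lemma oc_antitone x y : le L x y -> le L (oc L y) (oc L x).
Proof. apply HL. Qed.

Lemma perp_sym x y : perp L x y -> perp L y x.
Proof. unfold perp; intro hxy; rewrite <- (ocK y); now apply oc_antitone. Qed.

Lemma perp_comm x y : perp L x y <-> perp L y x.
Proof. split; apply perp_sym. Qed.

Lemma perp_le x x' y : le L x x' -> perp L x' y -> perp L x y.
Proof. apply ord_trans. Qed.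

Lemma perp_supl S y : perp L (sup L S) y <-> forall x, S x -> perp L x y.
Proof.
  split.
  - intros hS x hx; apply perp_le with (sup L S); [now apply le_sup | exact hS].
  - apply sup_le.
Qed.

Lemma perp_supr S y : perp L y (sup L S) <-> forall x, S x -> perp L y x.
Proof.
  rewrite perp_comm, perp_supl.
  split; intros hS x hx; apply perp_sym, hS, hx.
Qed.

Lemma perp_inj_r a b : (forall x, perp L x a <-> perp L x b) -> a = b.
Proof.
  intro hab.
  assert (hoc : oc L a = oc L b) by (apply ord_antisym; apply hab, ord_refl).
  now rewrite <- (ocK a), hoc, ocK.
Qed.

Lemma perp_inj_l a b : (forall y, perp L a y <-> perp L b y) -> a = b.
Proof.
  intro hab; apply perp_inj_r; intro x.
  rewrite !(perp_comm x); apply hab.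
Qed.

End InvolutionLattice.

Section Adjoint.

Variables X Y : COLat.
Hypothesis HX : is_complete_involution_lattice X.
Hypothesis HY : is_complete_involution_lattice Y.

(* (h y)^⊥ must be the largest x with f x ⊥ y, which gives the adjoint
   in closed form, without choosing a witness of linearity. *)
Definition adjoint (f : car X -> car Y) (y : car Y) : car X :=
  oc X (sup X (fun x => perp Y (f x) y)).

Lemma adjointP f : linear X Y f ->
  forall x y, perp Y (f x) y <-> perp X x (adjoint f y).
Proof.
  intros [h hh] x y; unfold adjoint.
  change (perp Y (f x) y <-> le X x (oc X (oc X (sup X (fun x => perp Y (f x) y))))).
  rewrite (ocK HX); split; [intro; now apply le_sup |].
  intro hx; apply hh, perp_le with (1 := HX) (2 := hx), perp_supl; [exact HX |].
  intros z hz; now apply hh.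
Qed.

Lemma linear_sup f (Z : car X -> Prop) : linear X Y f ->
  f (sup X Z) = sup Y (fun y => exists z, Z z /\ y = f z).
Proof.
  intro lf; apply perp_inj_l with (1 := HY); intro y.
  rewrite (adjointP lf), perp_supl, perp_supl by assumption.
  split.
  - intros hZ w [z [hz ->]]; apply (adjointP lf), hZ, hz.
  - intros hZ z hz; apply (adjointP lf), hZ; eauto.
Qed.

Lemma linear_adjoint f : linear X Y f -> linear Y X (adjoint f).
Proof.
  intro lf; exists f; intros y x.
  rewrite (perp_comm HX), <- (adjointP lf), (perp_comm HY); reflexivity.
Qed.

Lemma Lin_ext (f g : Lin X Y) :
  (forall x, proj1_sig f x = proj1_sig g x) -> f = g.
Proof.
  destruct f as [f lf], g as [g lg]; simpl; intro hfg.
  assert (f = g) as <- by now apply functional_extensionality.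
  f_equal; apply proof_irrelevance.
Qed.

Definition lin_joinf (S : Lin X Y -> Prop) (x : car X) : car Y :=
  sup Y (fun y => exists f, S f /\ y = proj1_sig f x).

Lemma linear_lin_joinf S : linear X Y (lin_joinf S).
Proof.
  exists (fun y => sup X (fun z => exists f : Lin X Y, S f /\ z = adjoint (proj1_sig f) y)).
  intros x y; unfold lin_joinf; rewrite perp_supl, perp_supr by assumption.
  split.
  - intros hS z [f [hf ->]]; apply (adjointP (proj2_sig f)), hS; eauto.
  - intros hS w [f [hf ->]]; apply (adjointP (proj2_sig f)), hS; eauto.
Qed.

Definition lin_join S : Lin X Y := exist _ _ (linear_lin_joinf S).

Lemma lin_join_lub S : is_lub (@lin_le X Y) S (lin_join S).
Proof.
  split.
  - intros f hf x; apply le_sup; eauto.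
  - intros g hg x; apply sup_le; [exact HY |].
    intros w [f [hf ->]]; now apply hg.
Qed.

Lemma lin_le_partial_order : is_partial_order (@lin_le X Y).
Proof.
  split; [| split].
  - intros f x; now apply ord_refl.
  - intros f g h hfg hgh x; now apply ord_trans with (proj1_sig g x).
  - intros f g hfg hgf; apply Lin_ext; intro x; now apply ord_antisym.
Qed.

Lemma is_lub_linE S s :
  is_lub (@lin_le X Y) S s <-> forall x, proj1_sig s x = lin_joinf S x.
Proof.
  split.
  - intros [ub least] x.
    assert (s = lin_join S) as ->; [| reflexivity].
    destruct (lin_join_lub S) as [ub' least'].
    apply lin_le_partial_order; auto.
  - intro hs; replace s with (lin_join S) by (symmetry; now apply Lin_ext).
    apply lin_join_lub.
Qed.

Lemma lin_complete_lattice : is_complete_lattice (@lin_le X Y).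
Proof.
  split; [exact lin_le_partial_order |].
  intro S; exists (lin_join S); apply lin_join_lub.
Qed.

Definition lin_adjoint (f : Lin X Y) : Lin Y X :=
  exist _ _ (linear_adjoint (proj2_sig f)).

End Adjoint.

Lemma linear_comp (X Y Z : COLat) (f : car Y -> car Z) (g : car X -> car Y) :
  linear Y Z f -> linear X Y g -> linear X Z (fun x => f (g x)).
Proof.
  intros [hf hhf] [hg hhg]; exists (fun z => hg (hf z)); intros x z.
  rewrite hhf, hhg; reflexivity.
Qed.

Definition lin_comp (X Y Z : COLat) (f : Lin Y Z) (g : Lin X Y) : Lin X Z :=
  exist _ _ (linear_comp (proj2_sig f) (proj2_sig g)).

Lemma linear_id (X : COLat) : linear X X (fun x => x).
Proof. exists (fun x => x); reflexivity. Qed.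

Definition lin_id (X : COLat) : Lin X X := exist _ _ (linear_id X).

Section LinearMapAlgebra.

Variables X Y Z : COLat.
Hypothesis HX : is_complete_involution_lattice X.
Hypothesis HY : is_complete_involution_lattice Y.
Hypothesis HZ : is_complete_involution_lattice Z.

Lemma lin_compA (W : COLat) (f : Lin Z W) (g : Lin Y Z) (h : Lin X Y) :
  lin_comp f (lin_comp g h) = lin_comp (lin_comp f g) h.
Proof. now apply Lin_ext. Qed.

Lemma lin_comp_lub_l (a : Lin Y Z) (S : Lin X Y -> Prop) s :
  is_lub (@lin_le X Y) S s ->
  is_lub (@lin_le X Z) (fun t => exists u, S u /\ t = lin_comp a u) (lin_comp a s).
Proof.
  rewrite !is_lub_linE by assumption; intros hs x; simpl.
  rewrite hs; unfold lin_joinf; rewrite (linear_sup HY HZ _ (proj2_sig a)).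
  apply sup_ext; intro z; split.
  - intros [w [[f [hf ->]] ->]]; exists (lin_comp a f); eauto.
  - intros [t [[u [hu ->]] ->]]; simpl; eauto.
Qed.

Lemma lin_comp_lub_r (a : Lin X Y) (S : Lin Y Z -> Prop) s :
  is_lub (@lin_le Y Z) S s ->
  is_lub (@lin_le X Z) (fun t => exists u, S u /\ t = lin_comp u a) (lin_comp s a).
Proof.
  rewrite !is_lub_linE by assumption; intros hs x; simpl.
  rewrite hs; apply sup_ext; intro z; split.
  - intros [f [hf ->]]; exists (lin_comp f a); eauto.
  - intros [t [[u [hu ->]] ->]]; simpl; eauto.
Qed.

Lemma lin_adjointK (f : Lin X Y) : lin_adjoint HY HX (lin_adjoint HX HY f) = f.
Proof.
  apply Lin_ext; intro x; simpl; apply perp_inj_l with (1 := HY); intro y.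
  rewrite (perp_comm HY), <- (adjointP HY (linear_adjoint HX HY (proj2_sig f))).
  rewrite (perp_comm HX), <- (adjointP HX (proj2_sig f)); reflexivity.
Qed.

Lemma lin_adjoint_comp (f : Lin Y Z) (g : Lin X Y) :
  lin_adjoint HX HZ (lin_comp f g) = lin_comp (lin_adjoint HX HY g) (lin_adjoint HY HZ f).
Proof.
  apply Lin_ext; intro z; simpl; apply perp_inj_r with (1 := HX); intro x.
  rewrite <- (adjointP HX (linear_comp (proj2_sig f) (proj2_sig g))),
    <- (adjointP HX (proj2_sig g)), <- (adjointP HY (proj2_sig f)).
  reflexivity.
Qed.

Lemma lin_adjoint_lub (S : Lin X Y -> Prop) s :
  is_lub (@lin_le X Y) S s ->
  is_lub (@lin_le Y X) (fun t => exists u, S u /\ t = lin_adjoint HX HY u)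
    (lin_adjoint HX HY s).
Proof.
  rewrite !is_lub_linE by assumption; intros hs y; simpl.
  apply perp_inj_r with (1 := HX); intro x.
  rewrite <- (adjointP HX (proj2_sig s)), hs; unfold lin_joinf.
  rewrite perp_supl, perp_supr by assumption.
  split.
  - intros hS w [t [[u [hu ->]] ->]]; apply (adjointP HX (proj2_sig u)), hS; eauto.
  - intros hS w [f [hf ->]]; apply (adjointP HX (proj2_sig f)).
    apply hS; exists (lin_adjoint HX HY f); eauto.
Qed.

End LinearMapAlgebra.

Theorem mainTheorem3 (X Y : COLat) (HX : is_COML X) (HY : is_COML Y) :
  (* (i) Lin(X,Y), ordered pointwise, is a complete lattice *)
  is_complete_lattice (@lin_le X Y) /\
  (* (ii) Lin(X) with composition, identity, pointwise joins and f |-> f^star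
     is a unital involutive quantale *)
  exists (mul : Lin X X -> Lin X X -> Lin X X) (e : Lin X X)
         (star : Lin X X -> Lin X X),
    (forall f g x, proj1_sig (mul f g) x = proj1_sig f (proj1_sig g x)) /\
    (forall x, proj1_sig e x = x) /\
    (forall f x y, perp X (proj1_sig f x) y <-> perp X x (proj1_sig (star f) y)) /\
    (forall (S : Lin X X -> Prop) (s : Lin X X),
        is_lub (@lin_le X X) S s <->
        (forall x, proj1_sig s x = sup X (fun y => exists f, S f /\ y = proj1_sig f x))) /\
    is_unital_involutive_quantale (@lin_le X X) mul e star.
Proof.
  apply is_COML_involution in HX, HY.
  split; [exact (lin_complete_lattice HX HY) |].
  exists (@lin_comp X X X), (lin_id X), (lin_adjoint HX HX).
  split; [reflexivity |]. split; [reflexivity |].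
  split; [intro f; exact (adjointP HX (proj2_sig f)) |].
  split; [exact (is_lub_linE HX HX) |].
  split; [split; [split |] |].
  - exact (lin_complete_lattice HX HX).
  - split; [apply lin_compA |].
    intros a S s hs; split; [exact (lin_comp_lub_l HX HX HX a hs) | exact (lin_comp_lub_r HX HX HX a hs)].
  - intro a; split; now apply Lin_ext.
  - split; [exact (lin_adjointK HX HX) |].
    split; [exact (lin_adjoint_comp HX HX HX) | exact (lin_adjoint_lub HX HX)].
Qed.
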